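(* Let $S\subset\mathbb N$, $r\ge2$ and $d\ge1$. If $E$ is a Bohr$_0$ set of dimension $d$ and $S$ is $2^dr$-large, then $S\cap E$ is $r$-large.
   Context: $\|t\|$ is the distance to the nearest integer. $E\subset\mathbb N$ is a Bohr$_0$ set if it contains a set $\{n\in\mathbb N:\|n\alpha_1\|<\varepsilon,\dots,\|n\alpha_k\|<\varepsilon\}$ for some $k\in\mathbb N$, $\alpha_1,\dots,\alpha_k\in\mathbb T$, $\varepsilon>0$; the least such $k$ is its dimension. For $m\ge2$, $R\subset\mathbb N$ is $m$-large if every coloring of $\mathbb N$ with $m$ colors contains arbitrarily long monochromatic arithmetic progressions with common difference in $R$. *)

From Stdlib Require Import Reals Lia.
Open Scope R_scope.

Definition dist_int (t : R) : R :=
  Rmin (frac_part t) (1 - frac_part t).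

(* N = {1,2,3,...}; subsets of N are predicates on nat (values at 0 irrelevant). *)

(* The Bohr_0 neighbourhood {n in N : ||n a_i|| < eps, i < k}. Frequencies in T
   are represented by real representatives (||n a|| only depends on a mod 1). *)
Definition bohr0_of_rank (k : nat) (E : nat -> Prop) : Prop :=
  exists (alpha : nat -> R) (eps : R), 0 < eps /\
    forall n : nat, (1 <= n)%nat ->
      (forall i : nat, (i < k)%nat -> dist_int (INR n * alpha i) < eps) -> E n.

Definition bohr0_dim (E : nat -> Prop) (d : nat) : Prop :=
  bohr0_of_rank d E /\ forall k : nat, (k < d)%nat -> ~ bohr0_of_rank k E.

Definition large (m : nat) (Rs : nat -> Prop) : Prop :=
  forall c : nat -> nat, (forall n, (1 <= n)%nat -> (c n < m)%nat) ->
  forall L : nat, exists a s : nat,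
    (1 <= a)%nat /\ (1 <= s)%nat /\ Rs s /\
    forall i : nat, (i < L)%nat -> c (a + i * s)%nat = c a.

From Stdlib Require Import Reals Lia Lra ZArith.

(* Refine a colouring by recording whether the fractional part of [n beta]
   lies in [0, 1/2) or in [1/2, 1).  Along a progression with difference [s]
   that is monochromatic for the refinement, the fractional parts stay in one
   half-interval while moving by a fixed representative of [s beta] modulo 1 at
   each step, so a progression of length about [1/(2 eps)] forces
   [||s beta|| < eps].  Each of the [d] frequencies doubles the number of
   colours, whence [2^d r]. *)

Local Open Scope R_scope.

Lemma dist_int_le_Rabs_sub_IZR (t : R) (z : Z) : dist_int t <= Rabs (t - IZR z).
Proof.
  unfold dist_int. destruct (base_fp t) as [Hf0 Hf1].
  pose proof (Rmin_l (frac_part t) (1 - frac_part t)).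
  pose proof (Rmin_r (frac_part t) (1 - frac_part t)).
  set (k := (Int_part t - z)%Z).
  assert (Ht : t - IZR z = frac_part t + IZR k)
    by (unfold k, frac_part; rewrite minus_IZR; ring).
  rewrite Ht. destruct (Z_le_gt_dec 0 k) as [Hk | Hk].
  - apply IZR_le in Hk. rewrite Rabs_pos_eq; lra.
  - assert (Hk' : IZR k <= -1) by (apply IZR_le; lia).
    rewrite Rabs_left; lra.
Qed.

Lemma IZR_eq0_Rabs_lt1 (z : Z) : Rabs (IZR z) < 1 -> z = 0%Z.
Proof. rewrite <- abs_IZR. intros Hz. apply lt_IZR in Hz. lia. Qed.

Lemma frac_part_add_sub (x t : R) :
  exists z : Z, frac_part (x + t) - frac_part x = t + IZR z.
Proof.
  exists (Int_part x - Int_part (x + t))%Z.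
  unfold frac_part. rewrite minus_IZR. ring.
Qed.

(* A walk confined to a half-open interval of length 1/2 whose every step is
   congruent to [theta] modulo 1 takes the same step [delta] each time, and
   [||theta|| <= |delta|]. *)
Lemma half_interval_walk_dist_int (y : nat -> R) (c theta : R) (M : nat) :
  (forall i, (i <= M)%nat -> c <= y i < c + 1/2) ->
  (forall i, (i < M)%nat -> exists z : Z, y (S i) - y i = theta + IZR z) ->
  INR M * dist_int theta < 1/2.
Proof.
  intros Hy Hstep. destruct M as [|M].
  { rewrite Rmult_0_l. lra. }
  set (delta := y 1%nat - y 0%nat).
  destruct (Hstep 0%nat ltac:(lia)) as [z0 Hz0].
  assert (Hconst : forall i, (i <= M)%nat -> y (S i) - y i = delta).
  { intros i Hi. destruct (Hstep i ltac:(lia)) as [z Hz].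
    pose proof (Hy i ltac:(lia)). pose proof (Hy (S i) ltac:(lia)).
    pose proof (Hy 0%nat ltac:(lia)). pose proof (Hy 1%nat ltac:(lia)).
    assert (Hzz : Rabs (IZR (z - z0)) < 1)
      by (rewrite minus_IZR; apply Rabs_def1; lra).
    apply IZR_eq0_Rabs_lt1 in Hzz.
    assert (z = z0) by lia. subst z. unfold delta. lra. }
  assert (Hlin : forall i, (i <= S M)%nat -> y i - y 0%nat = INR i * delta).
  { induction i as [|i IH]; intros Hi.
    - simpl. ring.
    - rewrite S_INR, Rmult_plus_distr_r, <- IH by lia.
      pose proof (Hconst i ltac:(lia)). lra. }
  assert (Hdelta : dist_int theta <= Rabs delta).
  { replace delta with (theta - IZR (- z0)) by (rewrite opp_IZR; unfold delta; lra).
    apply dist_int_le_Rabs_sub_IZR. }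
  assert (Hwalk : Rabs (INR (S M) * delta) < 1/2).
  { rewrite <- Hlin by lia. pose proof (Hy (S M) (le_n _)).
    pose proof (Hy 0%nat ltac:(lia)). apply Rabs_def1; lra. }
  rewrite Rabs_mult, (Rabs_pos_eq (INR _)) in Hwalk by apply pos_INR.
  pose proof (Rmult_le_compat_l (INR (S M)) _ _ (pos_INR _) Hdelta). lra.
Qed.

Definition upper_half (beta : R) (n : nat) : nat :=
  if Rlt_dec (frac_part (INR n * beta)) (1/2) then 0 else 1.

Lemma upper_half_lt2 (beta : R) (n : nat) : (upper_half beta n < 2)%nat.
Proof. unfold upper_half. destruct Rlt_dec; lia. Qed.

Lemma upper_half_constant_dist_int (beta : R) (a s M : nat) :
  (forall i, (i <= M)%nat -> upper_half beta (a + i * s) = upper_half beta a) ->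
  INR M * dist_int (INR s * beta) < 1/2.
Proof.
  intros Hmono.
  apply (half_interval_walk_dist_int (fun i => frac_part (INR (a + i * s) * beta))
           (if Rlt_dec (frac_part (INR a * beta)) (1/2) then 0 else 1/2)).
  - intros i Hi. specialize (Hmono i Hi). unfold upper_half in Hmono.
    pose proof (base_fp (INR (a + i * s) * beta)).
    destruct (Rlt_dec (frac_part (INR (a + i * s) * beta)) (1/2));
      destruct (Rlt_dec (frac_part (INR a * beta)) (1/2)); try discriminate; lra.
  - intros i _. destruct (frac_part_add_sub (INR (a + i * s) * beta) (INR s * beta))
      as [z Hz].
    exists z. rewrite <- Hz. cbv beta.
    replace (INR (a + S i * s) * beta) with (INR (a + i * s) * beta + INR s * beta)
      by (rewrite !plus_INR, !mult_INR, S_INR; ring).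
    reflexivity.
Qed.

Lemma exists_INR_mul_ge_half (eps : R) : 0 < eps -> exists M : nat, 1/2 <= INR M * eps.
Proof.
  intros He. destruct (archimed_cor1 eps He) as [M [HM HM0]].
  exists M. apply lt_0_INR in HM0.
  apply (Rmult_lt_compat_l (INR M)) in HM; [|exact HM0].
  rewrite Rinv_r in HM by lra. lra.
Qed.

Local Close Scope R_scope.

Lemma large_weaken (m : nat) (P Q : nat -> Prop) :
  large m P -> (forall s, 1 <= s -> P s -> Q s) -> large m Q.
Proof.
  intros HP HPQ c Hc L. destruct (HP c Hc L) as [a [s [Ha [Hs [HPs Hap]]]]].
  exists a, s. auto.
Qed.

Lemma large_product_colouring (m k : nat) (D : nat -> Prop) :
  large (k * m) D ->
  forall c g : nat -> nat,
    (forall n, 1 <= n -> c n < m) -> (forall n, 1 <= n -> g n < k) ->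
  forall L, exists a s, 1 <= a /\ 1 <= s /\ D s /\
    forall i, i < L -> c (a + i * s) = c a /\ g (a + i * s) = g a.
Proof.
  intros HD c g Hc Hg L.
  destruct (HD (fun n => c n + m * g n)) with (L := L) as [a [s [Ha [Hs [HDs Hap]]]]].
  { intros n Hn. pose proof (Hc n Hn). pose proof (Hg n Hn). nia. }
  exists a, s. do 3 (split; [assumption|]).
  intros i Hi. specialize (Hap i Hi). cbv beta in Hap.
  pose proof (Hc (a + i * s) ltac:(lia)). pose proof (Hc a Ha).
  destruct (Nat.lt_trichotomy (g (a + i * s)) (g a)) as [Hlt | [Heq | Hgt]].
  - exfalso. nia.
  - split; lia.
  - exfalso. nia.
Qed.

Lemma large_dist_int_lt (m : nat) (D : nat -> Prop) (beta eps : R) :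
  (0 < eps)%R -> large (2 * m) D ->
  large m (fun s => D s /\ (dist_int (INR s * beta) < eps)%R).
Proof.
  intros He HD c Hc L.
  destruct (exists_INR_mul_ge_half eps He) as [M HM].
  destruct (large_product_colouring m 2 D HD c (upper_half beta) Hc
              (fun n _ => upper_half_lt2 beta n) (Nat.max L (S M)))
    as [a [s [Ha [Hs [HDs Hap]]]]].
  exists a, s. do 2 (split; [assumption|]). split; [split; [assumption|] |].
  - assert (Hwalk : (INR M * dist_int (INR s * beta) < 1/2)%R).
    { apply (upper_half_constant_dist_int beta a s M).
      intros i Hi. apply (Hap i). lia. }
    apply Rnot_le_lt. intros Hge.
    pose proof (Rmult_le_compat_l (INR M) _ _ (pos_INR M) Hge). lra.
  - intros i Hi. apply (Hap i). lia.
Qed.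

Lemma large_bohr_neighbourhood (k : nat) : forall (m : nat) (D : nat -> Prop)
    (alpha : nat -> R) (eps : R),
  (0 < eps)%R -> large (2 ^ k * m) D ->
  large m (fun s => D s /\ forall i, i < k -> (dist_int (INR s * alpha i) < eps)%R).
Proof.
  induction k as [|k IH]; intros m D alpha eps He HD.
  - rewrite Nat.pow_0_r, Nat.mul_1_l in HD.
    apply (large_weaken _ _ _ HD). intros s _ HDs. split; [exact HDs | lia].
  - replace (2 ^ S k * m) with (2 ^ k * (2 * m)) in HD
      by (rewrite Nat.pow_succ_r'; ring).
    pose proof (large_dist_int_lt m _ (alpha k) eps He (IH _ D alpha eps He HD))
      as Hstep.
    apply (large_weaken _ _ _ Hstep). intros s _ [[HDs Hlt] Hk]. split; [exact HDs|].
    intros i Hi. destruct (Nat.eq_dec i k) as [-> | Hne]; [exact Hk | apply Hlt; lia].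
Qed.

Lemma large_inter_bohr0 (k m : nat) (D E : nat -> Prop) :
  bohr0_of_rank k E -> large (2 ^ k * m) D -> large m (fun n => D n /\ E n).
Proof.
  intros [alpha [eps [He HE]]] HD.
  apply (large_weaken _ _ _ (large_bohr_neighbourhood k m D alpha eps He HD)).
  intros s Hs [HDs Hbohr]. split; [exact HDs | exact (HE s Hs Hbohr)].
Qed.

Theorem mainTheorem18 (S E : nat -> Prop) (r d : nat) :
  (2 <= r)%nat -> (1 <= d)%nat ->
  bohr0_dim E d ->
  large (2 ^ d * r) S ->
  large r (fun n => S n /\ E n).
Proof.
  intros _ _ [HE _]. exact (large_inter_bohr0 d r S E HE).
Qed.
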